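(* Let $n\ge2$, let $L_1,\dots,L_n$ be finite lists of reals, each sorted in nondecreasing order, and fix $0\le\tau_{min}\le\tau_{max}$ and $\delta\ge0$. If at least one valid tuple exists, then Algorithm-Chain (for the chain or ordered-sibling constraints) and Algorithm-Sibling (for the unordered-sibling constraints) find a valid tuple.
   Context: A tuple is a choice of indices $(p_1,\dots,p_n)$, with $p_i$ an index into $L_i$; its values are $x_i=L_i[p_i]$. The three constraint types are: - Chain: $x_{i+1}-x_i\in[\tau_{min},\tau_{max}]$ for $i=1,\dots,n-1$. - Ordered sibling: $x_{i+1}-x_i\in[-\delta,\delta]$ for $i=1,\dots,n-1$. - Unordered sibling: $|x_i-x_j|\le(n-1)\delta$ for all $i\ne j$. A tuple satisfying the constraints in force is called valid. Both algorithms keep a pointer into each list, initially at the first entry, and search for a valid tuple among the entries at or after the pointers. Algorithm-Chain searches as follows. While the current entries are not valid, take the smallest $i$ such that $(x_i,x_{i+1})$ violates $x_{i+1}-x_i\in[a,b]$, where $[a,b]=[\tau_{min},\tau_{max}]$ for chains and $[a,b]=[-\delta,\delta]$ for ordered siblings. If $x_{i+1}-x_i>b$, advance the pointer of $L_i$; if $x_{i+1}-x_i<a$, advance the pointer of $L_{i+1}$. The search stops when the current entries are valid or a pointer runs past the end of its list. Algorithm-Sibling searches under the unordered-sibling constraints. It repeatedly advances the pointer of a list whose current entry is too small to belong to any valid tuple whose other entries lie at or after the current pointers, and stops at a valid tuple or when a list is exhausted. *)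

From HB Require Import structures.
From mathcomp Require Import all_boot all_order all_algebra.
Set Implicit Arguments. Unset Strict Implicit. Unset Printing Implicit Defensive.
Import Order.TTheory GRing.Theory Num.Theory.
Local Open Scope ring_scope.

(* The lists L_1..L_n are the entries (0-based) of L : seq (seq R), n = size L.
   A pointer vector / tuple of indices is p : nat -> nat (only p 0 .. p (n-1)
   matter); the value x_i is the p i-th entry of the i-th list. *)
Section Defs.
Variable R : realFieldType.

Definition entry (L : seq (seq R)) (p : nat -> nat) (i : nat) : R :=
  nth 0 (nth [::] L i) (p i).

Definition in_bounds (L : seq (seq R)) (p : nat -> nat) : bool :=
  [forall i : 'I_(size L), (p i < size (nth [::] L i))%N].

Definition consec_ok (a b : R) (L : seq (seq R)) (p : nat -> nat) : bool :=
  [forall i : 'I_(size L).-1, a <= entry L p i.+1 - entry L p i <= b].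

Definition pair_valid (a b : R) L p : bool := in_bounds L p && consec_ok a b L p.

Definition chain_valid (tmin tmax : R) L p : bool := pair_valid tmin tmax L p.
Definition osib_valid (delta : R) L p : bool := pair_valid (- delta) delta L p.
Definition usib_valid (delta : R) (L : seq (seq R)) (p : nat -> nat) : bool :=
  in_bounds L p &&
  [forall i : 'I_(size L), forall j : 'I_(size L),
     (i != j) ==> (`|entry L p i - entry L p j| <= ((size L).-1)%:R * delta)].

Definition start : nat -> nat := fun _ => 0%N.

Definition advance (p : nat -> nat) (i : nat) : nat -> nat :=
  fun k => if k == i then (p k).+1 else p k.

(* one step of Algorithm-Chain with window [a,b] (used when the current
   entries are in bounds and not valid) *)
Definition chain_step (a b : R) (L : seq (seq R)) (p : nat -> nat) : nat -> nat :=
  let i := find (fun i => ~~ (a <= entry L p i.+1 - entry L p i <= b))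
                (iota 0 (size L).-1) in
  if b < entry L p i.+1 - entry L p i then advance p i else advance p i.+1.

Definition chain_finds (a b : R) (L : seq (seq R)) : Prop :=
  exists k : nat,
    (forall j : nat, (j < k)%N ->
       in_bounds L (iter j (chain_step a b L) start) /\
       ~~ pair_valid a b L (iter j (chain_step a b L) start)) /\
    pair_valid a b L (iter k (chain_step a b L) start).

Definition sib_discardable (delta : R) (L : seq (seq R)) (p : nat -> nat)
    (i : nat) : Prop :=
  (i < size L)%N /\
  ~ (exists q : nat -> nat, usib_valid delta L q /\
        (forall k, (k < size L)%N -> (p k <= q k)%N) /\ q i = p i).

Definition sel_ok (delta : R) (L : seq (seq R)) (sel : (nat -> nat) -> nat) : Prop :=
  forall p, (exists i, sib_discardable delta L p i) ->
            sib_discardable delta L p (sel p).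

Definition sib_step (sel : (nat -> nat) -> nat) (p : nat -> nat) : nat -> nat :=
  advance p (sel p).

Definition sib_finds (delta : R) (L : seq (seq R)) (sel : (nat -> nat) -> nat) : Prop :=
  exists k : nat,
    (forall j : nat, (j < k)%N ->
       in_bounds L (iter j (sib_step sel) start) /\
       ~~ usib_valid delta L (iter j (sib_step sel) start)) /\
    usib_valid delta L (iter k (sib_step sel) start).

End Defs.

From HB Require Import structures.
From mathcomp Require Import all_boot all_order all_algebra.
From mathcomp Require Import zify lra.
Import Order.TTheory GRing.Theory Num.Theory.
Local Open Scope ring_scope.
Set Implicit Arguments. Unset Strict Implicit.

(* Fix a valid tuple q. Both algorithms keep every pointer at or before the
   corresponding index of q: a pointer sitting exactly at q's index is never
   the one advanced, because the entries of q would then violate the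
   constraints as well (the lists being sorted, entries at or after the
   pointers only widen the offending gap). Hence each step decreases the
   total distance to q, and the search ends at a valid tuple before any
   pointer runs past q. *)

Section PointerSearch.
Variables (n : nat) (q : nat -> nat).

Definition below (p : nat -> nat) : Prop := forall k, (k < n)%N -> (p k <= q k)%N.

Definition gap (p : nat -> nat) : nat := (\sum_(k < n) (q k - p k))%N.

Lemma below_start : below start.
Proof. by []. Qed.

Lemma below_advance p i : (p i < q i)%N -> below p -> below (advance p i).
Proof. by move=> lt_pq le_pq k lt_kn; rewrite /advance; case: eqP => [->|_]; auto. Qed.

Lemma eq_gap p p' : p =1 p' -> gap p = gap p'.
Proof. by move=> eq_pp'; apply: eq_bigr => k _; rewrite eq_pp'. Qed.

Lemma gap_advance p i : (i < n)%N -> (p i < q i)%N -> (gap (advance p i) < gap p)%N.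
Proof.
move=> lt_in lt_pq; rewrite /gap (bigD1 (Ordinal lt_in)) //=.
rewrite [X in (_ < X)%N](bigD1 (Ordinal lt_in)) //= /advance eqxx.
rewrite (eq_bigr (fun k : 'I_n => q k - p k)%N) => [|k ne_ki]; first by rewrite ltn_add2r; lia.
by rewrite /advance ifN //; apply: contra ne_ki => /eqP eq_ki; apply/eqP/val_inj.
Qed.

Variables (V : (nat -> nat) -> bool) (f : (nat -> nat) -> nat -> nat).
Hypothesis f_advances_below : forall p, below p -> ~~ V p ->
  exists i, [/\ (i < n)%N, (p i < q i)%N & f p =1 advance p i].

Lemma search_reaches p : below p ->
  exists k, (forall j, (j < k)%N -> below (iter j f p) /\ ~~ V (iter j f p)) /\
            V (iter k f p).
Proof.
elim: {p}(gap p).+1 {-2}p (ltnSn (gap p)) => [//|m IHm] p lt_gap le_pq.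
have [Vp|nVp] := boolP (V p); first by exists 0%N.
have [i [lt_in lt_pq f_p]] := f_advances_below le_pq nVp.
have below_fp : below (f p) by move=> k lt_kn; rewrite f_p; exact: below_advance.
have gap_fp : (gap (f p) < m)%N.
  by rewrite (eq_gap f_p); exact: leq_trans (gap_advance lt_in lt_pq) _.
have [k [before at_k]] := IHm _ gap_fp below_fp.
exists k.+1; split; last by rewrite iterSr.
by case=> [|j] //= lt_jk; rewrite -iterS iterSr; apply: before.
Qed.

End PointerSearch.

Lemma in_bounds_below (R : realFieldType) (L : seq (seq R)) q p :
  in_bounds L q -> below (size L) q p -> in_bounds L p.
Proof.
move=> /forallP q_in le_pq; apply/forallP=> i.
exact: leq_ltn_trans (le_pq _ (ltn_ord i)) (q_in i).
Qed.

Section SortedLists.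
Variables (R : realFieldType) (L : seq (seq R)).
Hypothesis L_sorted : all (sorted <=%R) L.

Lemma entry_below q p k : in_bounds L q -> below (size L) q p -> (k < size L)%N ->
  entry L p k <= entry L q k.
Proof.
move=> /forallP q_in le_pq lt_kL.
have sorted_k : sorted <=%R (nth [::] L k) by apply: (allP L_sorted); exact: mem_nth.
have lt_qk := q_in (Ordinal lt_kL).
apply: (sorted_leq_nth le_trans lexx 0 sorted_k); rewrite ?inE //; last exact: le_pq.
exact: leq_ltn_trans (le_pq _ lt_kL) lt_qk.
Qed.

Lemma entry_at q p k : p k = q k -> entry L p k = entry L q k.
Proof. by rewrite /entry => ->. Qed.

Lemma search_finds V f q : in_bounds L q ->
  (forall p, below (size L) q p -> ~~ V p ->
     exists i, [/\ (i < size L)%N, (p i < q i)%N & f p =1 advance p i]) ->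
  exists k, (forall j, (j < k)%N -> in_bounds L (iter j f start) /\ ~~ V (iter j f start)) /\
            V (iter k f start).
Proof.
move=> q_in f_adv; have [k [before at_k]] := search_reaches f_adv (below_start q).
exists k; split=> // j /before[le_pq nV]; split=> //; exact: in_bounds_below le_pq.
Qed.

Lemma chain_step_below a b q p : pair_valid a b L q -> below (size L) q p ->
  ~~ pair_valid a b L p ->
  exists i, [/\ (i < size L)%N, (p i < q i)%N & chain_step a b L p =1 advance p i].
Proof.
move=> /andP[q_in /forallP q_ok] le_pq.
rewrite /pair_valid (in_bounds_below q_in le_pq) => /forallPn[i0 bad_i0].
set P := fun i => ~~ (a <= entry L p i.+1 - entry L p i <= b).
have hasP : has P (iota 0 (size L).-1).
  by apply/hasP; exists (val i0); rewrite // mem_iota /=.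
have lt_iL : (find P (iota 0 (size L).-1) < (size L).-1)%N by move: hasP; rewrite has_find size_iota.
set i := find P (iota 0 (size L).-1) in lt_iL.
have bad_i : (entry L p i.+1 - entry L p i < a) || (b < entry L p i.+1 - entry L p i).
  by move: (nth_find 0%N hasP); rewrite nth_iota // add0n /P negb_and -!ltNge.
rewrite /chain_step -/P -/i.
have lt_i1L : (i.+1 < size L)%N by move: lt_iL; case: (size L).
have lt_i0L : (i < size L)%N := ltnW lt_i1L.
have /andP[q_lo q_hi] := q_ok (Ordinal lt_iL).
have le_i := entry_below q_in le_pq lt_i0L.
have le_i1 := entry_below q_in le_pq lt_i1L.
case: ifP => [too_wide|/negbT]; [exists i | rewrite -leNgt => not_wide; exists i.+1].
- split=> //; rewrite ltn_neqAle le_pq // andbT; apply/eqP => /entry_at eq_i.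
  by move: too_wide q_hi le_i1; rewrite eq_i; lra.
- split=> //; rewrite ltn_neqAle le_pq // andbT; apply/eqP => /entry_at eq_i1.
  by move: bad_i not_wide q_lo le_i; rewrite eq_i1; case/orP; lra.
Qed.

Lemma chain_finds_of_valid a b : (exists q, pair_valid a b L q) -> chain_finds a b L.
Proof.
case=> q q_ok; apply: (search_finds (proj1 (andP q_ok))) => p.
exact: chain_step_below.
Qed.

Lemma sib_discardable_lt delta p (i j : 'I_(size L)) : i != j -> in_bounds L p ->
  ((size L).-1)%:R * delta < entry L p j - entry L p i -> sib_discardable delta L p i.
Proof.
move=> ne_ij p_in wide; split=> // -[q [/andP[q_in /forallP q_ok] [le_pq /entry_at eq_i]]].
have le_j := entry_below q_in le_pq (ltn_ord j).
have := forallP (q_ok i) j; rewrite ne_ij /= distrC => close.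
by move: (ler_norm (entry L q j - entry L q i)) close wide; rewrite eq_i; lra.
Qed.

Lemma sib_discardable_exists delta p : in_bounds L p -> ~~ usib_valid delta L p ->
  exists i, sib_discardable delta L p i.
Proof.
rewrite /usib_valid => p_in; rewrite p_in => /forallPn[i /forallPn[j]].
rewrite negb_imply -ltNge => /andP[ne_ij far].
have [le_ij|lt_ji] := lerP (entry L p i) (entry L p j).
  exists (val i); apply: sib_discardable_lt ne_ij p_in _.
  by move: far; rewrite distrC ger0_norm // subr_ge0.
exists (val j); apply: (sib_discardable_lt (i := j) (j := i)); rewrite 1?eq_sym //.
by move: far; rewrite ger0_norm // subr_ge0 ltW.
Qed.

Lemma sib_finds_of_valid delta sel : (exists q, usib_valid delta L q) ->
  sel_ok delta L sel -> sib_finds delta L sel.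
Proof.
case=> q q_ok sel_disc; have q_in := proj1 (andP q_ok).
apply: (search_finds q_in) => p le_pq bad_p.
have p_in := in_bounds_below q_in le_pq.
have [lt_sL not_ext] := sel_disc p (sib_discardable_exists p_in bad_p).
exists (sel p); split=> //; rewrite ltn_neqAle le_pq // andbT.
by apply/eqP => eq_s; apply: not_ext; exists q.
Qed.

End SortedLists.

Theorem mainTheorem2 (R : realFieldType) (L : seq (seq R)) (tmin tmax delta : R) :
  (2 <= size L)%N ->
  all (sorted <=%R) L ->
  0 <= tmin -> tmin <= tmax -> 0 <= delta ->
  ((exists p, chain_valid tmin tmax L p) -> chain_finds tmin tmax L) /\
  ((exists p, osib_valid delta L p) -> chain_finds (- delta) delta L) /\
  ((exists p, usib_valid delta L p) ->
     forall sel : (nat -> nat) -> nat, sel_ok delta L sel -> sib_finds delta L sel).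
Proof.
move=> _ L_sorted _ _ _; split; [|split].
- exact: chain_finds_of_valid.
- exact: chain_finds_of_valid.
- by move=> valid sel; exact: sib_finds_of_valid.
Qed.
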